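(* If a language $\mathcal L\subseteq\mathcal A^*$ satisfies RBC, then it has eventually constant growth: there are $N_0,K$ such that $p(n+1)-p(n)=K$ for all $n\ge N_0$.
   Context: $\mathcal{A}$ finite alphabet, $\mathcal{A}^*$ nonempty finite words. A language is a set $\mathcal L\subseteq\mathcal A^*$ with $\mathcal A\subseteq\mathcal L$, closed under subwords, and such that each $w\in\mathcal L$ has $a,b\in\mathcal A$ with $awb\in\mathcal L$. $p(n)$ is the number of words of length $n$ in $\mathcal L$. $Ex^\ell(w)=\{a: aw\in\mathcal L\}$, $Ex^r(w)=\{b: wb\in\mathcal L\}$; left special if $|Ex^\ell(w)|\ge2$, right special if $|Ex^r(w)|\ge 2$, bispecial if both. A bispecial $w$ is regular bispecial if there is exactly one $\hat a\in Ex^\ell(w)$ with $\hat aw$ right special and exactly one $\hat b\in Ex^r(w)$ with $w\hat b$ left special. RBC: there is $n_0$ such that every bispecial word of length $\ge n_0$ is regular bispecial. *)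

From mathcomp Require Import all_boot all_order all_algebra.
Set Implicit Arguments. Unset Strict Implicit. Unset Printing Implicit Defensive.

Section Lang.
Variable A : finType.
Variable L : pred (seq A).

Definition is_language : Prop :=
  [/\ (forall w, w \in L -> w != [::]),
      (forall a : A, [:: a] \in L),
      (forall u v w, (u ++ v ++ w) \in L -> v != [::] -> v \in L)
    & (forall w, w \in L -> exists a b : A, (a :: w ++ [:: b]) \in L)].

Definition complexity (n : nat) : nat := #|[set t : n.-tuple A | tval t \in L]|.

Definition Exl (w : seq A) : {set A} := [set a | (a :: w) \in L].
Definition Exr (w : seq A) : {set A} := [set b | (w ++ [:: b]) \in L].

Definition left_special (w : seq A) : bool := 2 <= #|Exl w|.
Definition right_special (w : seq A) : bool := 2 <= #|Exr w|.
Definition bispecial (w : seq A) : bool := left_special w && right_special w.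

Definition regular_bispecial (w : seq A) : bool :=
  [&& bispecial w,
      #|[set a in Exl w | right_special (a :: w)]| == 1
    & #|[set b in Exr w | left_special (w ++ [:: b])]| == 1].

Definition RBC : Prop :=
  exists n0 : nat, forall w, w \in L -> bispecial w -> n0 <= size w ->
    regular_bispecial w.
End Lang.

From mathcomp Require Import all_boot all_order all_algebra.
From Stdlib Require Import Classical.
Set Implicit Arguments. Unset Strict Implicit. Unset Printing Implicit Defensive.

(* Put s(n) = sum over the words w of length n of (#Exr(w) - 1), so that
   p(n+1) - p(n) = s(n).  Grouping the words of length n+1 by their suffix of
   length n gives s(n+1) = sum_w sum_(a in Exl(w)) (#Exr(aw) - 1).  Only the
   letters a with aw right special contribute, each at most #Exr(w) - 1 since
   Exr(aw) is contained in Exr(w); and once |w| >= n0 there is at most one such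
   a: a regular bispecial w has exactly one, a w that is not left special has
   only one left extension, and if w is not right special no aw is.  So s is
   eventually nonincreasing in nat, hence eventually constant. *)

Section NonincreasingNat.
Variable f : nat -> nat.
Hypothesis f_nonincr : forall n, f n.+1 <= f n.

Lemma nonincr_eventually_const : exists M, forall n, M <= n -> f n = f M.
Proof.
have f_anti : {homo f : m n / m <= n >-> n <= m}.
  by apply: homo_leq => // y x z xy yz; apply: leq_trans yz xy.
suff: forall k N, f N <= k -> exists M, forall n, M <= n -> f n = f M
  by move/(_ _ 0 (leqnn _)).
elim=> [|k IHk] N fN_le.
  exists N => n /f_anti; move: fN_le; rewrite leqn0 => /eqP ->.
  by rewrite leqn0 => /eqP.
have [[n [Nn fn_neq]]|const] := classic (exists n, N <= n /\ f n <> f N); last first.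
  by exists N => n Nn; apply: NNPP => fn_neq; apply: const; exists n.
apply: (IHk n); rewrite -ltnS; apply: leq_trans fN_le.
by rewrite ltn_neqAle f_anti // andbT; apply/eqP.
Qed.
End NonincreasingNat.

Section Extensions.
Variable A : finType.
Variable L : pred (seq A).
Hypothesis L_lang : is_language L.

Definition words n := [set t : n.-tuple A | tval t \in L].

Lemma mem_infix u v w : u ++ v ++ w \in L -> v != [::] -> v \in L.
Proof. by case: L_lang => _ _ infix_closed _; apply: infix_closed. Qed.

Lemma mem_behead a t : a :: t \in L -> t != [::] -> t \in L.
Proof. by move=> atL; apply: (@mem_infix [:: a] t [::]); rewrite cats0. Qed.

Lemma mem_belast t b : t ++ [:: b] \in L -> t != [::] -> t \in L.
Proof. exact: (@mem_infix [::] t [:: b]). Qed.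

Lemma Exr_cons_subset a t : Exr L (a :: t) \subset Exr L t.
Proof. by apply/subsetP => b; rewrite !inE => /mem_behead; apply; case: t. Qed.

Lemma Exr_card_gt0 t : t \in L -> 0 < #|Exr L t|.
Proof.
case: L_lang => _ _ _ extendable /extendable [a [b atbL]].
by apply/card_gt0P; exists b; rewrite inE; apply: mem_behead atbL _; case: t.
Qed.

Lemma big_words_succ n (h : n.-tuple A * A -> n.+1.-tuple A) (F : seq A -> nat) :
    injective h -> (forall p, tval (h p) \in L -> tval p.1 \in L) ->
  \sum_(u in words n.+1) F u =
    \sum_(t in words n) \sum_(a | tval (h (t, a)) \in L) F (h (t, a)).
Proof.
move=> h_inj h_mem; have h_bij : bijective h.
  by apply: inj_card_bij h_inj _; rewrite card_prod !card_tuple expnSr.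
rewrite (reindex h) ?pair_big_dep; last exact: onW_bij.
apply: eq_big => -[t a] //; rewrite !inE /=.
by apply/idP/andP => [uL|[]//]; split=> //; apply: h_mem uL.
Qed.

Lemma big_words_cons n (F : seq A -> nat) : 0 < n ->
  \sum_(u in words n.+1) F u = \sum_(t in words n) \sum_(a in Exl L t) F (a :: t).
Proof.
move=> n_gt0; rewrite (@big_words_succ n (fun p => [tuple of p.2 :: p.1])) /=.
- by apply: eq_bigr => t _; apply: eq_bigl => a; rewrite inE.
- by move=> [t a] [t' a'] /(congr1 val) [-> /val_inj->].
- by move=> [t a] /= /mem_behead; apply; rewrite -size_eq0 size_tuple -lt0n.
Qed.

Lemma big_words_rcons n (F : seq A -> nat) : 0 < n ->
  \sum_(u in words n.+1) F u = \sum_(t in words n) \sum_(b in Exr L t) F (rcons t b).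
Proof.
move=> n_gt0; rewrite (@big_words_succ n (fun p => [tuple of rcons p.1 p.2])) /=.
- by apply: eq_bigr => t _; apply: eq_bigl => b; rewrite inE cats1.
- by move=> [t a] [t' a'] /(congr1 val) /rcons_inj [/val_inj-> ->].
- move=> [t b] /=; rewrite -cats1 => /mem_belast; apply.
  by rewrite -size_eq0 size_tuple -lt0n.
Qed.

Lemma card_right_special_ext_le1 t : (bispecial L t -> regular_bispecial L t) ->
  #|[set a in Exl L t | right_special L (a :: t)]| <= 1.
Proof.
have [_ /(_ isT)/and3P[_ /eqP-> _] // | not_bisp _] := boolP (bispecial L t).
move: not_bisp; rewrite negb_and => /orP[not_left | not_right].
  apply: leq_trans (subset_leq_card (_ : _ \subset Exl L t)) _.
    by apply/subsetP => a; rewrite inE => /andP[].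
  by rewrite leqNgt.
suff -> : [set a in Exl L t | right_special L (a :: t)] = set0 by rewrite cards0.
apply/setP => a; rewrite !inE /right_special.
rewrite -ltnNge in not_right.
by rewrite leqNgt (leq_ltn_trans (subset_leq_card (Exr_cons_subset a t))) ?andbF.
Qed.

Lemma sum_Exl_excess_le t : (bispecial L t -> regular_bispecial L t) ->
  \sum_(a in Exl L t) (#|Exr L (a :: t)| - 1) <= #|Exr L t| - 1.
Proof.
move=> reg; set S := [set a in Exl L t | right_special L (a :: t)].
rewrite (bigID (mem S)) /= [X in _ + X]big1 ?addn0; last first.
  move=> a /andP[aE]; rewrite /S in_set aE /right_special -ltnNge ltnS.
  by move=> ?; apply/eqP; rewrite subn_eq0.
apply: leq_trans (_ : \sum_(a in S) (#|Exr L t| - 1) <= _).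
  rewrite [X in _ <= X](eq_bigl (fun a => (a \in Exl L t) && (a \in S))).
    by apply: leq_sum => a _; rewrite leq_sub2r ?subset_leq_card ?Exr_cons_subset.
  by move=> a; rewrite andb_idl // /S in_set => /andP[].
rewrite sum_nat_const -[X in _ <= X]mul1n leq_mul2r.
by rewrite (card_right_special_ext_le1 reg) orbT.
Qed.

Definition complexity_step n := \sum_(t in words n) (#|Exr L t| - 1).

Lemma complexityS n : 0 < n -> complexity L n.+1 = complexity_step n + complexity L n.
Proof.
move=> n_gt0; rewrite /complexity -/(words n.+1) -/(words n) -!sum1_card.
rewrite (big_words_rcons (fun=> 1) n_gt0) -big_split.
apply: eq_bigr => t; rewrite inE => /Exr_card_gt0 Exr_gt0.
by rewrite sum1_card /= subnK.
Qed.

Lemma complexity_step_nonincr n0 n :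
    (forall w, w \in L -> bispecial L w -> n0 <= size w -> regular_bispecial L w) ->
  0 < n -> n0 <= n -> complexity_step n.+1 <= complexity_step n.
Proof.
move=> RBC_n0 n_gt0 n0_le_n; rewrite /complexity_step.
rewrite (big_words_cons (fun u => #|Exr L u| - 1) n_gt0).
apply: leq_sum => t; rewrite inE => tL; apply: sum_Exl_excess_le => bisp.
by apply: RBC_n0; rewrite ?size_tuple.
Qed.
End Extensions.

Local Open Scope ring_scope.

Theorem mainTheorem3 (A : finType) (L : pred (seq A)) :
  is_language L -> RBC L ->
  exists (N0 : nat) (K : int), forall n : nat, (N0 <= n)%N ->
    (complexity L n.+1)%:Z - (complexity L n)%:Z = K.
Proof.
move=> L_lang [n0 RBC_n0]; set N := maxn 1 n0.
have step_nonincr m : (complexity_step L (N + m.+1) <= complexity_step L (N + m))%N.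
  rewrite addnS; apply: (complexity_step_nonincr L_lang RBC_n0).
    by apply: leq_trans (leq_addr _ _); apply: leq_maxl.
  by apply: leq_trans (leq_addr _ _); apply: leq_maxr.
have [M step_const] := nonincr_eventually_const step_nonincr.
exists (N + M)%N, (complexity_step L (N + M))%:Z => n NM_le_n.
have n_gt0 : (0 < n)%N by apply: leq_trans NM_le_n; rewrite addn_gt0 leq_maxl.
rewrite (complexityS L_lang n_gt0) PoszD GRing.addrK -(subnKC NM_le_n) -addnA.
by rewrite step_const ?leq_addr.
Qed.
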